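(* Let $q\ge8$ be even. For $\mu\in\mathbb{F}_q$ let $\ell_\mu$ be the line through $\mathbf{P}(0,\mu,0,1)$ and $\mathbf{P}(1,0,1,0)$, and let $L_c$ be the line through $\mathbf{P}(1,0,0,1)$ and $\mathbf{P}(0,0,1,0)$. Then for any $\mu',\mu''\in\mathbb{F}_q\setminus\{0,1\}$ with $\mu'\ne\mu''$, the lines $\ell_{\mu'}$ and $\ell_{\mu''}$ lie in different orbits of $G_q$. Moreover, no line $\ell_\mu$ with $\mu\in\mathbb{F}_q\setminus\{0,1\}$ lies in the $G_q$-orbit of $L_c$.
   Context: Points of $\mathrm{PG}(3,q)$ are written $\mathbf{P}(x_0,x_1,x_2,x_3)$ in homogeneous coordinates over the field $\mathbb{F}_q$. The twisted cubic is $\mathscr{C}=\{\mathbf{P}(t^3,t^2,t,1):t\in\mathbb{F}_q\}\cup\{\mathbf{P}(1,0,0,0)\}$ and $G_q$ is the group of projectivities of $\mathrm{PG}(3,q)$ fixing $\mathscr{C}$ (for $q\ge5$, $G_q\cong\mathrm{PGL}(2,q)$). Two lines lie in the same orbit if some element of $G_q$ maps one onto the other. *)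

From HB Require Import structures.
From mathcomp Require Import all_boot all_order all_algebra all_field.
Set Implicit Arguments. Unset Strict Implicit. Unset Printing Implicit Defensive.
Import GRing.Theory.
Local Open Scope ring_scope.

(* Points of PG(3,q) are represented by nonzero row vectors of 'rV[F]_4;
   two nonzero vectors represent the same point iff they span the same
   row space.  Lines are 2 x 4 matrices whose row space is 2-dimensional.
   Projectivities act on row vectors by right multiplication v |-> v *m A,
   A invertible. *)

Section PG3.
Variable F : finFieldType.

Definition rv4 (x0 x1 x2 x3 : F) : 'rV[F]_4 :=
  \row_(i < 4) nth 0 [:: x0; x1; x2; x3] i.

Definition line_through (u v : 'rV[F]_4) : 'M[F]_(2, 4) := col_mx u v.

Definition on_cubic (v : 'rV[F]_4) : bool :=
  (v != 0) &&
  ([exists t : F, (v == rv4 (t ^+ 3) (t ^+ 2) t 1)%MS]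
   || (v == rv4 1 0 0 0)%MS).

Definition fixes_cubic (A : 'M[F]_4) : Prop :=
  A \in unitmx /\ forall v : 'rV[F]_4, on_cubic (v *m A) = on_cubic v.

Definition same_orbit (L1 L2 : 'M[F]_(2, 4)) : Prop :=
  exists A : 'M[F]_4, fixes_cubic A /\ (L1 *m A == L2)%MS.

Definition ell (mu : F) : 'M[F]_(2, 4) :=
  line_through (rv4 0 mu 0 1) (rv4 1 0 1 0).

Definition Lc : 'M[F]_(2, 4) :=
  line_through (rv4 1 0 0 1) (rv4 0 0 1 0).

End PG3.

(* The quadrics Q0 = x0 x2 + x1^2, Q1 = x1 x3 + x2^2 and Q2 = x0 x3 + x1 x2 span the net
   of quadrics through the twisted cubic.  Pulling a quadric of the net back along a
   projectivity A fixing the cubic gives a quadratic form vanishing at every point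
   (t^3, t^2, t, 1), i.e. a sextic in t with at least 7 roots; hence it lies in the net
   again, and A acts on the net by an invertible 3 x 3 matrix M.  In characteristic 2 the
   members a Q0 + b Q1 + c Q2 with degenerate polar form are those on the conic a b = c^2,
   whose nucleus is Q2; since M preserves the conic it fixes Q2 up to a nonzero factor, so
   A preserves the zero set of Q2 and the alternating form B2 up to a scalar.
   The line Lc is totally isotropic for B2 and no line ell mu is, which separates their
   orbits.  On ell mu the quadric Q2 vanishes only at P(0,mu,0,1) and P(1,0,1,0), so A maps
   these points to the corresponding points of ell mu', possibly swapped.  As P(0,mu,0,1)
   lies in the radical of B0 and P(1,0,1,0) in that of B1, comparing the values of Q0 and
   Q1 at these two points forces mu = mu'. *)

From mathcomp Require Import all_boot all_order all_algebra all_field.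
From mathcomp Require Import ring.
Set Implicit Arguments. Unset Strict Implicit. Unset Printing Implicit Defensive.
Import GRing.Theory.
Local Open Scope ring_scope.

Lemma vanishing_poly_coef0 (F : finFieldType) (n : nat) (c : nat -> F) :
  (n <= #|F|)%N -> (forall t, \sum_(i < n) c i * t ^+ i = 0) ->
  forall i, (i < n)%N -> c i = 0.
Proof.
move=> leF c_root i lt_in.
suff p0 : \poly_(j < n) c j = 0 by have := coef_poly n c i; rewrite lt_in p0 coef0.
apply: contraTeq leF => /max_poly_roots roots_lt; rewrite -ltnNge cardE.
apply: leq_trans (size_poly n c); apply: roots_lt (enum_uniq F).
by apply/allP => t _; rewrite /root horner_poly c_root.
Qed.

Lemma sum_ord4 (V : nmodType) (f : 'I_4 -> V) : \sum_(i < 4) f i = f 0 + f 1 + f 2 + f 3.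
Proof.
rewrite !big_ord_recl big_ord0 addr0 !addrA.
by congr (_ + _ + _ + _); congr f; apply: val_inj.
Qed.

Lemma sum_ord3 (V : nmodType) (f : 'I_3 -> V) : \sum_(i < 3) f i = f 0 + f 1 + f 2.
Proof.
rewrite !big_ord_recl big_ord0 addr0 !addrA.
by congr (_ + _ + _); congr f; apply: val_inj.
Qed.

Lemma vanishing_rowpoly_coef0 (F : finFieldType) m n (c : nat -> 'rV[F]_m) :
  (n <= #|F|)%N -> (forall t, \sum_(i < n) t ^+ i *: c i = 0) ->
  forall i, (i < n)%N -> c i = 0.
Proof.
move=> leF c_root i lt_in; apply/rowP => k; rewrite mxE.
apply: (@vanishing_poly_coef0 F n (fun i => c i 0 k)) => // t.
transitivity ((\sum_(i < n) t ^+ i *: c i) 0 k); last by rewrite c_root mxE.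
by rewrite summxE; apply: eq_bigr => j _; rewrite mxE mulrC.
Qed.

Lemma line_mulmx_span (F : fieldType) n (u w a b : 'rV[F]_n) (A : 'M[F]_n) :
  (col_mx u w *m A <= col_mx a b)%MS ->
  exists x y z t, u *m A = x *: a + y *: b /\ w *m A = z *: a + t *: b.
Proof.
rewrite mul_col_mx col_mx_sub => /andP[sub_u sub_w].
have span v : (v <= col_mx a b)%MS -> exists x y, v = x *: a + y *: b.
  case/submxP=> D ->; rewrite -[D](@hsubmxK _ 1 1 1) mul_row_col.
  rewrite [lsubmx D]mx11_scalar [rsubmx D]mx11_scalar !mul_scalar_mx.
  by exists (lsubmx D 0 0), (rsubmx D 0 0).
have [x [y ->]] := span _ sub_u; have [z [t ->]] := span _ sub_w.
by exists x, y, z, t.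
Qed.

Section TwistedCubicNet.
Variable F : finFieldType.
Hypothesis char2 : 2 \in [pchar F].
Let two0 : 2 = 0 :> F := pcharf0 char2.

Definition rv3 (a b c : F) : 'rV[F]_3 := \row_(k < 3) nth 0 [:: a; b; c] k.

Lemma rv3_inj a b c a' b' c' :
  rv3 a b c = rv3 a' b' c' -> [/\ a = a', b = b' & c = c'].
Proof.
move=> e; have ek k : rv3 a b c 0 k = rv3 a' b' c' 0 k by rewrite e.
by split; [have := ek 0 | have := ek 1 | have := ek 2]; rewrite !mxE.
Qed.

Lemma row3_ext (v : 'rV[F]_3) : v = rv3 (v 0 0) (v 0 1) (v 0 2).
Proof.
apply/rowP => -[[|[|[|//]]] lt]; rewrite mxE /=; congr (v 0 _); exact: val_inj.
Qed.

Lemma rv3_0 : rv3 0 0 0 = 0.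
Proof. by apply/rowP => k; rewrite !mxE; case: k => [[|[|[|]]]]. Qed.

Lemma rv3_mulmx a b c (M : 'M[F]_3) : rv3 a b c *m M =
  rv3 (a * M 0 0 + b * M 1 0 + c * M 2 0) (a * M 0 1 + b * M 1 1 + c * M 2 1)
      (a * M 0 2 + b * M 1 2 + c * M 2 2).
Proof. by rewrite [LHS]row3_ext !mxE !sum_ord3 !mxE. Qed.

Lemma rv4_0 : rv4 0 0 0 0 = 0 :> 'rV[F]_4.
Proof. by apply/rowP => k; rewrite !mxE; case: k => [[|[|[|[|]]]]]. Qed.

Lemma row4_ext (v : 'rV[F]_4) : v = rv4 (v 0 0) (v 0 1) (v 0 2) (v 0 3).
Proof.
apply/rowP => -[[|[|[|[|//]]]] lt]; rewrite mxE /=; congr (v 0 _); exact: val_inj.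
Qed.

Lemma scale_rv4 (a x0 x1 x2 x3 : F) :
  a *: rv4 x0 x1 x2 x3 = rv4 (a * x0) (a * x1) (a * x2) (a * x3).
Proof. by apply/rowP => k; rewrite !mxE; case: k => [[|[|[|[|]]]]]. Qed.

Lemma add_rv4 (x0 x1 x2 x3 y0 y1 y2 y3 : F) :
  rv4 x0 x1 x2 x3 + rv4 y0 y1 y2 y3 = rv4 (x0 + y0) (x1 + y1) (x2 + y2) (x3 + y3).
Proof. by apply/rowP => k; rewrite !mxE; case: k => [[|[|[|[|]]]]]. Qed.

Definition net (v : 'rV[F]_4) : 'rV[F]_3 :=
  rv3 (v 0 0 * v 0 2 + v 0 1 ^+ 2) (v 0 1 * v 0 3 + v 0 2 ^+ 2)
      (v 0 0 * v 0 3 + v 0 1 * v 0 2).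

(* [polar] is the characteristic-2 polar form of [net]: the cross term 2 x1 y1 of the
   polar of Q0 is dropped. *)
Definition polar (u v : 'rV[F]_4) : 'rV[F]_3 :=
  rv3 (u 0 0 * v 0 2 + u 0 2 * v 0 0) (u 0 1 * v 0 3 + u 0 3 * v 0 1)
      (u 0 0 * v 0 3 + u 0 3 * v 0 0 + u 0 1 * v 0 2 + u 0 2 * v 0 1).

Lemma net_rv4 (a b c d : F) :
  net (rv4 a b c d) = rv3 (a * c + b ^+ 2) (b * d + c ^+ 2) (a * d + b * c).
Proof. by rewrite /net !mxE. Qed.

Lemma polar_rv4 (a b c d a' b' c' d' : F) :
  polar (rv4 a b c d) (rv4 a' b' c' d') =
  rv3 (a * c' + c * a') (b * d' + d * b') (a * d' + d * a' + b * c' + c * b').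
Proof. by rewrite /polar !mxE. Qed.

Lemma scale_rv3 (x a b c : F) : x *: rv3 a b c = rv3 (x * a) (x * b) (x * c).
Proof. by rewrite [LHS]row3_ext !mxE. Qed.

Lemma netZ (x : F) (v : 'rV[F]_4) : net (x *: v) = x ^+ 2 *: net v.
Proof. by rewrite /net scale_rv3 !mxE; congr rv3; ring. Qed.

Lemma polarZl (x : F) (u v : 'rV[F]_4) : polar (x *: u) v = x *: polar u v.
Proof. by rewrite /polar scale_rv3 !mxE; congr rv3; ring. Qed.

Lemma addr_eq0_pchar2 (x y : F) : (x + y == 0) = (x == y).
Proof. by rewrite addr_eq0 oppr_pchar2. Qed.

Lemma netD u v : net (u + v) = net u + net v + polar u v.
Proof.
by rewrite [LHS]row3_ext [RHS]row3_ext /net /polar !mxE /=; congr rv3; ring: two0.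
Qed.

Lemma net_span (l : 'rV[F]_3) :
  l = l 0 0 *: net (rv4 1 1 0 0) + l 0 1 *: net (rv4 0 0 1 1) + l 0 2 *: net (rv4 1 0 0 1).
Proof. by rewrite [LHS]row3_ext [RHS]row3_ext !net_rv4 !mxE /=; congr rv3; ring. Qed.

Lemma net_mulmx_inj (X Y : 'M[F]_3) : (forall v, net v *m X = net v *m Y) -> X = Y.
Proof.
move=> eqXY; apply/row_matrixP => i; rewrite !rowE (net_span (delta_mx 0 i)).
by rewrite !mulmxDl -!scalemxAl !eqXY.
Qed.

Lemma net_cubic_point (t : F) : net (rv4 (t ^+ 3) (t ^+ 2) t 1) = 0.
Proof. by rewrite net_rv4 -rv3_0; congr rv3; ring: two0. Qed.

Lemma on_cubic_net v : on_cubic v -> net v = 0.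
Proof.
case/andP => _ /orP[/existsP[t /andP[/sub_rVP[a ->] _]] | /andP[/sub_rVP[a ->] _]].
  by rewrite netZ net_cubic_point scaler0.
rewrite netZ (_ : net _ = 0) ?scaler0 //.
by rewrite net_rv4 -rv3_0; congr rv3; ring.
Qed.

Lemma on_cubic_point (t : F) : on_cubic (rv4 (t ^+ 3) (t ^+ 2) t 1).
Proof.
apply/andP; split; last by apply/orP; left; apply/existsP; exists t; rewrite submx_refl.
by apply/eqP => /(congr1 (fun v : 'rV_4 => v 0 3)); rewrite !mxE /= => /eqP; rewrite oner_eq0.
Qed.

Lemma fixes_cubic_inv (A : 'M[F]_4) : fixes_cubic A -> fixes_cubic (invmx A).
Proof.
case=> unitA fixA; split; first by rewrite unitmx_inv.
by move=> v; rewrite -fixA mulmxKV.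
Qed.

(* The Gram matrix of [d 0 0 B0 + d 1 0 B1 + d 2 0 B2] has determinant
   [(d 0 0 * d 1 0 - d 2 0 ^+ 2) ^+ 2]. *)
Lemma polar_radical_conic (k : 'rV[F]_4) (d : 'cV[F]_3) :
  k != 0 -> (forall y, polar k y *m d = 0) -> d 0 0 * d 1 0 = d 2 0 ^+ 2.
Proof.
move=> nzk rad_k; set a := d 0 0; set b := d 1 0; set c := d 2 0.
have rad y : a * polar k y 0 0 + b * polar k y 0 1 + c * polar k y 0 2 = 0.
  transitivity ((polar k y *m d) 0 0); last by rewrite rad_k mxE.
  by rewrite [RHS]mxE sum_ord3 -/a -/b -/c; ring.
have e0 : a * k 0 2 + c * k 0 3 = 0 by rewrite -(rad (rv4 1 0 0 0)) /polar !mxE /=; ring.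
have e1 : b * k 0 3 + c * k 0 2 = 0 by rewrite -(rad (rv4 0 1 0 0)) /polar !mxE /=; ring.
have e2 : a * k 0 0 + c * k 0 1 = 0 by rewrite -(rad (rv4 0 0 1 0)) /polar !mxE /=; ring.
have e3 : b * k 0 1 + c * k 0 0 = 0 by rewrite -(rad (rv4 0 0 0 1)) /polar !mxE /=; ring.
apply/eqP; rewrite -subr_eq0; apply: contraNT nzk => nz_pf.
have kill x : (a * b - c ^+ 2) * x = 0 -> x = 0.
  by move/eqP; rewrite mulf_eq0 (negPf nz_pf) => /eqP.
rewrite [k]row4_ext -rv4_0; apply/eqP; congr rv4; apply: kill.
- transitivity (b * (a * k 0 0 + c * k 0 1) - c * (b * k 0 1 + c * k 0 0)); first ring.
  by rewrite e2 e3; ring.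
- transitivity (a * (b * k 0 1 + c * k 0 0) - c * (a * k 0 0 + c * k 0 1)); first ring.
  by rewrite e2 e3; ring.
- transitivity (b * (a * k 0 2 + c * k 0 3) - c * (b * k 0 3 + c * k 0 2)); first ring.
  by rewrite e0 e1; ring.
- transitivity (a * (b * k 0 3 + c * k 0 2) - c * (a * k 0 2 + c * k 0 3)); first ring.
  by rewrite e0 e1; ring.
Qed.

Section NetInvariance.
Variable A : 'M[F]_4.

Let N i := net (row i A).
Let P i j := polar (row i A) (row j A).
Let c := [:: N 3; P 2 3; N 2 + P 1 3; P 0 3 + P 1 2; N 1 + P 0 2; P 0 1; N 0].

Lemma net_cubic_mulmx t :
  net (rv4 (t ^+ 3) (t ^+ 2) t 1 *m A) = \sum_(i < 7) t ^+ i *: c`_i.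
Proof.
rewrite [LHS]row3_ext [RHS]row3_ext !summxE !big_ord_recl !big_ord0 /= !mxE.
by rewrite !sum_ord4 !mxE /bump /=; congr rv3; ring: two0.
Qed.

Lemma net_mulmx_mod_cubic v :
  net (v *m A) = net v *m \matrix_(i < 3) [:: P 0 2; P 1 3; P 0 3]`_i
    + (v 0 3 ^+ 2 *: c`_0 + (v 0 2 * v 0 3) *: c`_1 + v 0 2 ^+ 2 *: c`_2
       + (v 0 1 * v 0 2) *: c`_3 + v 0 1 ^+ 2 *: c`_4 + (v 0 0 * v 0 1) *: c`_5
       + v 0 0 ^+ 2 *: c`_6).
Proof.
rewrite [LHS]row3_ext [RHS]row3_ext /= !mxE !sum_ord3 !sum_ord4 !mxE /=.
by congr rv3; ring: two0.
Qed.

Lemma net_mulmx_vanishing_on_cubic :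
  (7 <= #|F|)%N -> (forall t, net (rv4 (t ^+ 3) (t ^+ 2) t 1 *m A) = 0) ->
  forall v, net (v *m A) = net v *m \matrix_(i < 3) [:: P 0 2; P 1 3; P 0 3]`_i.
Proof.
move=> leF cubic0 v.
have c0 : forall i, (i < 7)%N -> c`_i = 0.
  by apply: (vanishing_rowpoly_coef0 leF) => t; rewrite -net_cubic_mulmx cubic0.
by rewrite net_mulmx_mod_cubic !c0 // !scaler0 !addr0.
Qed.

End NetInvariance.

Lemma cubic_net_invariant (A : 'M[F]_4) : (7 <= #|F|)%N -> fixes_cubic A ->
  exists M : 'M[F]_3, forall v, net (v *m A) = net v *m M.
Proof.
move=> leF [_ fixA]; eexists; apply: net_mulmx_vanishing_on_cubic leF _ => t.
by apply: on_cubic_net; rewrite fixA on_cubic_point.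
Qed.

Section Nucleus.
Variables (A : 'M[F]_4) (M : 'M[F]_3).
Hypothesis fixA : fixes_cubic A.
Hypothesis netA : forall v, net (v *m A) = net v *m M.

Lemma polar_mulmx u w : polar (u *m A) (w *m A) = polar u w *m M.
Proof.
apply: (@addrI _ (net (u *m A) + net (w *m A))).
by rewrite -netD -mulmxDl !netA netD !mulmxDl.
Qed.

Lemma net_mx_unit : (7 <= #|F|)%N -> M \in unitmx.
Proof.
move=> leF; have [M' netA'] := cubic_net_invariant leF (fixes_cubic_inv fixA).
suff /mulmx1_unit[] : M' *m M = 1%:M by [].
apply: net_mulmx_inj => v; rewrite mulmxA -netA' -netA mulmxKV ?mulmx1 //.
by case: fixA.
Qed.

(* (0, 0, s, 1) is a radical vector of the polar form of Q0 + s^2 Q1 + s Q2, so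
   (0, 0, s, 1) A^-1 is one for its pull-back along A, whose coordinates in the net are
   the three sums below. *)
Lemma net_mx_conic s :
  (M 0 0 + M 0 1 * s ^+ 2 + M 0 2 * s) * (M 1 0 + M 1 1 * s ^+ 2 + M 1 2 * s)
  = (M 2 0 + M 2 1 * s ^+ 2 + M 2 2 * s) ^+ 2.
Proof.
have [unitA _] := fixA; set r := rv4 0 0 s 1; set d := (rv3 1 (s ^+ 2) s)^T.
have nz_r : r *m invmx A != 0.
  apply: contra_neq (@oner_neq0 F) => /(congr1 (mulmx^~ A)).
  by rewrite mulmxKV // mul0mx => /(congr1 (fun v : 'rV_4 => v 0 3)); rewrite !mxE.
have rad_r y : polar (r *m invmx A) y *m (M *m d) = 0.
  rewrite mulmxA -polar_mulmx mulmxKV // [y *m A]row4_ext polar_rv4.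
  by apply/matrixP => i j; rewrite !ord1 !mxE sum_ord3 !mxE /=; ring: two0.
have := polar_radical_conic nz_r rad_r; rewrite !mxE !sum_ord3 !mxE /= => e.
by apply: etrans (etrans _ e) _; ring.
Qed.

Lemma net_nucleus : (7 <= #|F|)%N -> [/\ M 0 2 = 0, M 1 2 = 0 & M 2 2 != 0].
Proof.
move=> leF; have unitM := net_mx_unit leF.
have coef0 : forall i, (i < 5)%N -> [:: M 0 0 * M 1 0 + M 2 0 ^+ 2;
    M 0 0 * M 1 2 + M 0 2 * M 1 0; M 0 0 * M 1 1 + M 0 2 * M 1 2 + M 0 1 * M 1 0 + M 2 2 ^+ 2;
    M 0 2 * M 1 1 + M 0 1 * M 1 2; M 0 1 * M 1 1 + M 2 1 ^+ 2]`_i = 0.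
  apply: vanishing_poly_coef0 => [|s]; first exact: leq_trans leF.
  have conic_s := congr1 (+%R^~ ((M 2 0 + M 2 1 * s ^+ 2 + M 2 2 * s) ^+ 2)) (net_mx_conic s).
  rewrite /= addrr_pchar2 // in conic_s.
  by rewrite !big_ord_recl big_ord0 /= /bump /= -[RHS]conic_s; ring: two0.
have /= odd1 := coef0 1%N isT; have /= odd3 := coef0 3%N isT.
have kerM : rv3 (M 1 2) (M 0 2) 0 *m M = 0.
  rewrite rv3_mulmx -rv3_0; congr rv3; last by rewrite mul0r addr0 mulrC addrr_pchar2.
    by apply: etrans (etrans _ odd1) _; ring.
  by apply: etrans (etrans _ odd3) _; ring.
have /rv3_inj[M12 M02 _] : rv3 (M 1 2) (M 0 2) 0 = rv3 0 0 0.
  by rewrite rv3_0 -(mulmxK unitM (rv3 _ _ _)) kerM mul0mx.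
split=> //; apply/eqP => M22.
have := mulmxKV unitM (rv3 0 0 1); set x := rv3 0 0 1 *m invmx M.
rewrite [x]row3_ext rv3_mulmx M02 M12 M22 => /rv3_inj[_ _].
by rewrite !mulr0 !addr0 => /eqP; rewrite eq_sym oner_eq0.
Qed.

End Nucleus.

Lemma net_ell_point (x y m : F) :
  net (x *: rv4 0 m 0 1 + y *: rv4 1 0 1 0) =
  rv3 (x ^+ 2 * m ^+ 2 + y ^+ 2) (x ^+ 2 * m + y ^+ 2) (x * y * (1 + m)).
Proof. by rewrite !scale_rv4 add_rv4 net_rv4; congr rv3; ring. Qed.

Lemma polar_ell_points (x y z t m : F) :
  polar (x *: rv4 0 m 0 1 + y *: rv4 1 0 1 0) (z *: rv4 0 m 0 1 + t *: rv4 1 0 1 0) =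
  rv3 0 0 ((x * t + y * z) * (1 + m)).
Proof. by rewrite !scale_rv4 !add_rv4 polar_rv4; congr rv3; ring: two0. Qed.

Lemma polar_Lc_points (x y z t : F) :
  polar (x *: rv4 1 0 0 1 + y *: rv4 0 0 1 0) (z *: rv4 1 0 0 1 + t *: rv4 0 0 1 0) =
  rv3 (x * t + y * z) 0 0.
Proof. by rewrite !scale_rv4 !add_rv4 polar_rv4; congr rv3; ring: two0. Qed.

Section Orbits.
Variables (A : 'M[F]_4) (M : 'M[F]_3).
Hypothesis netA : forall v, net (v *m A) = net v *m M.
Hypotheses (M02 : M 0 2 = 0) (M12 : M 1 2 = 0) (M22 : M 2 2 != 0).

Let polarA := polar_mulmx netA.
Let zero_oneE := (mulr0, mul0r, mulr1, mul1r, addr0, add0r, expr0n, expr1n).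

Lemma ell_fixed_endpoints (mu m x t : F) : mu != 0 -> t != 0 ->
  rv4 0 mu 0 1 *m A = x *: rv4 0 m 0 1 -> rv4 1 0 1 0 *m A = t *: rv4 1 0 1 0 ->
  mu = m.
Proof.
move=> nz_mu nz_t hu hw.
have := polarA (rv4 0 mu 0 1) (rv4 0 1 0 0); rewrite hu polarZl.
rewrite [rv4 0 1 0 0 *m A]row4_ext !polar_rv4 scale_rv3 rv3_mulmx.
case/rv3_inj; rewrite ?zero_oneE => M10 _ _.
have := polarA (rv4 1 0 1 0) (rv4 1 0 0 0); rewrite hw polarZl.
rewrite [rv4 1 0 0 0 *m A]row4_ext !polar_rv4 scale_rv3 rv3_mulmx.
case/rv3_inj; rewrite ?zero_oneE => _ M01 _.
have := netA (rv4 0 mu 0 1); rewrite hu netZ !net_rv4 scale_rv3 rv3_mulmx -M10 -M01.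
case/rv3_inj; rewrite ?zero_oneE /= => eu0 eu1 _.
have := netA (rv4 1 0 1 0); rewrite hw netZ !net_rv4 scale_rv3 rv3_mulmx -M10 -M01.
case/rv3_inj; rewrite ?zero_oneE /= => ew0 ew1 _.
rewrite -ew0 in eu0; rewrite -ew1 in eu1.
have : mu * t ^+ 2 * (m - mu) = 0.
  by transitivity (m * (x ^+ 2 * m) - x ^+ 2 * m ^+ 2); [rewrite eu0 eu1 | ]; ring.
by move/eqP; rewrite !mulf_eq0 subr_eq0 (negPf nz_mu) (negPf nz_t) => /eqP.
Qed.

Lemma ell_swapped_endpoints (mu m y z : F) : mu != 0 -> m != 0 -> z != 0 ->
  rv4 0 mu 0 1 *m A = y *: rv4 1 0 1 0 -> rv4 1 0 1 0 *m A = z *: rv4 0 m 0 1 ->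
  mu = m.
Proof.
move=> nz_mu nz_m nz_z hu hw.
have := polarA (rv4 0 mu 0 1) (rv4 0 1 0 0); rewrite hu polarZl.
rewrite [rv4 0 1 0 0 *m A]row4_ext !polar_rv4 scale_rv3 rv3_mulmx.
case/rv3_inj; rewrite ?zero_oneE => _ M11 _.
have := polarA (rv4 1 0 1 0) (rv4 1 0 0 0); rewrite hw polarZl.
rewrite [rv4 1 0 0 0 *m A]row4_ext !polar_rv4 scale_rv3 rv3_mulmx.
case/rv3_inj; rewrite ?zero_oneE => M00 _ _.
have := netA (rv4 0 mu 0 1); rewrite hu netZ !net_rv4 scale_rv3 rv3_mulmx -M00 -M11.
case/rv3_inj; rewrite ?zero_oneE /= => eu0 eu1 _.
have := netA (rv4 1 0 1 0); rewrite hw netZ !net_rv4 scale_rv3 rv3_mulmx -M00 -M11.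
case/rv3_inj; rewrite ?zero_oneE /= => ew0 ew1 _.
have : mu * m * z ^+ 2 * (m - mu) = 0.
  transitivity (mu * M 1 0 - mu ^+ 2 * M 0 1); first by rewrite -ew0 -ew1; ring.
  by rewrite -eu0 -eu1 subrr.
by move/eqP; rewrite !mulf_eq0 subr_eq0 (negPf nz_mu) (negPf nz_m) (negPf nz_z) => /eqP.
Qed.

Lemma ell_image_not_ell (mu m x y z t : F) :
  mu != 0 -> mu != 1 -> m != 0 -> m != 1 -> mu != m ->
  rv4 0 mu 0 1 *m A = x *: rv4 0 m 0 1 + y *: rv4 1 0 1 0 ->
  rv4 1 0 1 0 *m A = z *: rv4 0 m 0 1 + t *: rv4 1 0 1 0 -> False.
Proof.
move=> nz_mu mu_neq1 nz_m m_neq1 mu_neq_m hu hw.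
have nz_1m : 1 + m != 0 by rewrite addr_eq0_pchar2 eq_sym.
have nz_1mu : 1 + mu != 0 by rewrite addr_eq0_pchar2 eq_sym.
have xy0 : x * y * (1 + m) = 0.
  have := netA (rv4 0 mu 0 1); rewrite hu net_ell_point net_rv4 rv3_mulmx M02 M12.
  by case/rv3_inj=> _ _ ->; ring.
have zt0 : z * t * (1 + m) = 0.
  have := netA (rv4 1 0 1 0); rewrite hw net_ell_point net_rv4 rv3_mulmx M02 M12.
  by case/rv3_inj=> _ _ ->; ring.
have nz_xtyz : x * t + y * z != 0.
  have := polarA (rv4 0 mu 0 1) (rv4 1 0 1 0).
  rewrite hu hw polar_ell_points polar_rv4 rv3_mulmx M02 M12 => /rv3_inj[_ _ e].
  have {}e : (x * t + y * z) * (1 + m) = (1 + mu) * M 2 2 by rewrite e; ring.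
  apply/eqP => xtyz0; move: (mulf_neq0 nz_1mu M22).
  by rewrite -e xtyz0 mul0r eqxx.
move/eqP: mu_neq_m; apply.
have [y0 | nz_y] := eqVneq y 0.
  have nz_t : t != 0 by apply: contraNneq nz_xtyz => t0; apply/eqP; rewrite y0 t0; ring.
  have /eqP z0 : z == 0.
    by move/eqP: zt0; rewrite !mulf_eq0 (negPf nz_1m) (negPf nz_t) !orbF.
  apply: (ell_fixed_endpoints (x := x) nz_mu nz_t).
    by rewrite hu y0 scale0r addr0.
  by rewrite hw z0 scale0r add0r.
have /eqP x0 : x == 0 by move/eqP: xy0; rewrite !mulf_eq0 (negPf nz_1m) (negPf nz_y) !orbF.
have nz_z : z != 0 by apply: contraNneq nz_xtyz => z0; apply/eqP; rewrite x0 z0; ring.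
have /eqP t0 : t == 0 by move/eqP: zt0; rewrite !mulf_eq0 (negPf nz_1m) (negPf nz_z) !orbF.
apply: (ell_swapped_endpoints (y := y) nz_mu nz_m nz_z).
  by rewrite hu x0 scale0r add0r.
by rewrite hw t0 scale0r addr0.
Qed.

Lemma Lc_image_not_ell (mu x y z t : F) : mu != 1 ->
  rv4 0 mu 0 1 *m A = x *: rv4 1 0 0 1 + y *: rv4 0 0 1 0 ->
  rv4 1 0 1 0 *m A = z *: rv4 1 0 0 1 + t *: rv4 0 0 1 0 -> False.
Proof.
move=> mu_neq1 hu hw; have := polarA (rv4 0 mu 0 1) (rv4 1 0 1 0).
rewrite hu hw polar_Lc_points polar_rv4 rv3_mulmx M02 M12 => /rv3_inj[_ _ e].
have : (1 + mu) * M 2 2 == 0 by rewrite [_ * _](_ : _ = 0) // e; ring.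
by rewrite mulf_eq0 addr_eq0_pchar2 eq_sym (negPf mu_neq1) (negPf M22).
Qed.

End Orbits.

End TwistedCubicNet.

Theorem theorem5p3 (F : finFieldType) (char2 : (2 \in [pchar F])%N)
  (hq : (8 <= #|F|)%N) :
  (forall mu' mu'' : F, mu' != 0 -> mu' != 1 -> mu'' != 0 -> mu'' != 1 ->
     mu' != mu'' -> ~ same_orbit (ell mu') (ell mu''))
  /\ (forall mu : F, mu != 0 -> mu != 1 -> ~ same_orbit (ell mu) (Lc F)).
Proof.
have leF : (7 <= #|F|)%N := ltnW hq.
split=> [mu m nz_mu mu_neq1 nz_m m_neq1 mu_neq_m | mu _ mu_neq1]
  [A [fixA /andP[/line_mulmx_span[x [y [z [t [hu hw]]]]] _]]];
  have [M netA] := cubic_net_invariant char2 leF fixA;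
  have [M02 M12 M22] := net_nucleus char2 fixA netA leF.
  exact: (ell_image_not_ell char2 netA M02 M12 M22 (z := z) (t := t)
           nz_mu mu_neq1 nz_m m_neq1 mu_neq_m hu hw).
exact: (Lc_image_not_ell char2 netA M02 M12 M22 (z := z) (t := t) mu_neq1 hu hw).
Qed.
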